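(* For every real $\lambda$ and $n\in\{0,2\}$, define $$I_n(\lambda)=\int_0^\infty \frac{\operatorname{erfc}\big(\sqrt{s^2+\lambda^2}\big)}{\sqrt{s^2+\lambda^2}}\,s^{n+1}\,ds,\qquad K_n(\lambda)=\int_0^\infty \frac{\phi_3\big(\sqrt{s^2+\lambda^2}\big)}{(s^2+\lambda^2)^{5/2}}\,s^{n+5}\,ds,$$ where $\phi_3(t)=1-s_3(t)$ and $s_3(t)=\operatorname{erf}(t)-\frac{2}{\sqrt\pi}\big(\frac23 t^3+t\big)e^{-t^2}$. Then $$K_0=\tfrac83\,I_0,\qquad K_2=8\,I_2$$ as functions of $\lambda$.
   Context: $\operatorname{erf}(r)=\frac{2}{\sqrt\pi}\int_0^r e^{-s^2}\,ds$ and $\operatorname{erfc}=1-\operatorname{erf}$. *)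

From Stdlib Require Import Reals.
From Coquelicot Require Import Coquelicot.
Open Scope R_scope.

Definition erf (r : R) : R := 2 / sqrt PI * RInt (fun s => exp (- s ^ 2)) 0 r.
Definition erfc (r : R) : R := 1 - erf r.

Definition s3 (t : R) : R := erf t - 2 / sqrt PI * (2 / 3 * t ^ 3 + t) * exp (- t ^ 2).
Definition phi3 (t : R) : R := 1 - s3 t.

Definition int0inf (f : R -> R) : R := RInt_gen f (at_point 0) (Rbar_locally p_infty).

Definition I_n (n : nat) (lam : R) : R :=
  int0inf (fun s => erfc (sqrt (s ^ 2 + lam ^ 2)) / sqrt (s ^ 2 + lam ^ 2) * s ^ (n + 1)).

(* K_n(lam) = int_0^oo phi3(sqrt(s^2+lam^2)) / (s^2+lam^2)^(5/2) * s^(n+5) ds,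
   with (s^2+lam^2)^(5/2) written as sqrt(s^2+lam^2)^5 *)
Definition K_n (n : nat) (lam : R) : R :=
  int0inf (fun s => phi3 (sqrt (s ^ 2 + lam ^ 2)) / sqrt (s ^ 2 + lam ^ 2) ^ 5 * s ^ (n + 5)).

From Stdlib Require Import Reals Lra Psatz.
From Coquelicot Require Import Coquelicot.
Open Scope R_scope.

(* Substituting r = sqrt (s^2 + lam^2), so that s ds = r dr and s^2 = r^2 - lam^2, turns each
   of I_0, I_2, K_0, K_2 into an integral over [|lam|, +oo) of erfc r or phi3 r times a Laurent
   polynomial in r.  As erfc' and phi3' are polynomial multiples of e^{-r^2}, integration by
   parts gives explicit antiderivatives in r that vanish at +oo, built from
   erfc r * r^k, e^{-r^2} * r^k and their reciprocal-power analogues.  Evaluated at the lower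
   limit r = |lam|, where lam^2 = r^2, the K-antiderivatives collapse to 8/3 resp. 8 times the
   I-antiderivatives.  That erf tends to 1 (needed for erfc to vanish at +oo) is the Gaussian
   integral, obtained by Feynman's trick. *)

Lemma ex_derive_continuous_R (f : R -> R) x : ex_derive f x -> continuous f x.
Proof. exact (@ex_derive_continuous R_AbsRing R_NormedModule f x). Qed.

(** * The Gaussian integral *)

Definition gauss (s : R) : R := exp (- s ^ 2).

Definition gauss_int (x : R) : R := RInt gauss 0 x.

Lemma continuous_gauss x : continuous gauss x.
Proof. apply ex_derive_continuous_R. unfold gauss. auto_derive. easy. Qed.

Lemma ex_RInt_gauss a b : ex_RInt gauss a b.
Proof. apply (@ex_RInt_continuous R_CompleteNormedModule). intros; apply continuous_gauss. Qed.

Lemma is_derive_gauss_int x : is_derive gauss_int x (gauss x).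
Proof.
  apply is_derive_RInt with 0.
  - apply filter_forall. intros y. apply (@RInt_correct R_CompleteNormedModule), ex_RInt_gauss.
  - apply continuous_gauss.
Qed.

Lemma gauss_int_nonneg x : 0 <= x -> 0 <= gauss_int x.
Proof.
  intros Hx. apply RInt_ge_0; [lra | apply ex_RInt_gauss |].
  intros; left; apply exp_pos.
Qed.

(* Feynman's trick: x |-> gauss_int x ^ 2 + RInt (gauss_damped x) 0 1 has zero derivative. *)
Definition gauss_damped (x t : R) : R := exp (- (x ^ 2 * (1 + t ^ 2))) / (1 + t ^ 2).

Lemma is_derive_gauss_damped x t :
  is_derive (fun u => gauss_damped u t) x (- 2 * x * exp (- (x ^ 2 * (1 + t ^ 2)))).
Proof. unfold gauss_damped. auto_derive; [nra |]. cbn [pow]. field. nra. Qed.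

Lemma ex_RInt_gauss_damped x a b : ex_RInt (gauss_damped x) a b.
Proof.
  apply (@ex_RInt_continuous R_CompleteNormedModule). intros t _.
  apply ex_derive_continuous_R. unfold gauss_damped. auto_derive. nra.
Qed.

Lemma continuity_2d_Derive_gauss_damped x t :
  continuity_2d_pt (fun u v => Derive (fun z => gauss_damped z v) u) x t.
Proof.
  apply continuity_2d_pt_ext with (fun u v => (-2 * u) * exp (- (u * u * (1 + v * v)))).
  { intros u v. symmetry. apply is_derive_unique.
    replace (-2 * u * exp (- (u * u * (1 + v * v))))
      with (- 2 * u * exp (- (u ^ 2 * (1 + v ^ 2)))) by (cbn [pow]; repeat f_equal; ring).
    apply is_derive_gauss_damped. }
  apply continuity_2d_pt_mult.
  - apply continuity_2d_pt_mult; [apply continuity_2d_pt_const | apply continuity_2d_pt_id1].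
  - apply (continuity_1d_2d_pt_comp exp (fun u v => - (u * u * (1 + v * v)))).
    + apply derivable_continuous_pt, derivable_pt_exp.
    + apply continuity_2d_pt_opp, continuity_2d_pt_mult.
      * apply continuity_2d_pt_mult; apply continuity_2d_pt_id1.
      * apply continuity_2d_pt_plus; [apply continuity_2d_pt_const |].
        apply continuity_2d_pt_mult; apply continuity_2d_pt_id2.
Qed.

Lemma RInt_Derive_gauss_damped x :
  RInt (fun t => Derive (fun u => gauss_damped u t) x) 0 1 = - 2 * gauss x * gauss_int x.
Proof.
  (* e^{-x^2 (1 + t^2)} = e^{-x^2} e^{-(x t)^2}, then substitute x t *)
  rewrite (RInt_ext _ (fun t => scal (-2 * gauss x) (scal x (gauss (x * t + 0))))).
  2:{ intros t _.
      transitivity (- 2 * x * exp (- (x ^ 2 * (1 + t ^ 2)))).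
      { apply is_derive_unique, is_derive_gauss_damped. }
      replace (exp (- (x ^ 2 * (1 + t ^ 2))))
        with (exp (- x ^ 2) * exp (- (x * t + 0) ^ 2)) by (rewrite <- exp_plus; f_equal; ring).
      unfold scal, gauss; simpl; unfold mult; simpl. ring. }
  apply is_RInt_unique, (@is_RInt_scal R_NormedModule), (@is_RInt_comp_lin R_NormedModule).
  replace (x * 0 + 0) with 0 by ring. replace (x * 1 + 0) with x by ring.
  apply (@RInt_correct R_CompleteNormedModule), ex_RInt_gauss.
Qed.

Lemma is_derive_gauss_int_sq_plus_damped x :
  is_derive (fun y => gauss_int y ^ 2 + RInt (gauss_damped y) 0 1) x 0.
Proof.
  assert (Hsq := is_derive_pow gauss_int 2 x _ (is_derive_gauss_int x)).
  assert (Hdamped : is_derive (fun y => RInt (gauss_damped y) 0 1) x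
                      (RInt (fun t => Derive (fun u => gauss_damped u t) x) 0 1)).
  { apply (is_derive_RInt_param gauss_damped).
    - apply filter_forall. intros y t _. eexists. apply is_derive_gauss_damped.
    - intros t _. apply continuity_2d_Derive_gauss_damped.
    - apply filter_forall. intros y. apply ex_RInt_gauss_damped. }
  rewrite RInt_Derive_gauss_damped in Hdamped.
  assert (H := is_derive_plus _ _ x _ _ Hsq Hdamped).
  replace (plus _ _) with 0 in H by (unfold plus; simpl; ring).
  exact H.
Qed.

Lemma gauss_int_sq_plus_damped x : gauss_int x ^ 2 + RInt (gauss_damped x) 0 1 = PI / 4.
Proof.
  set (h y := gauss_int y ^ 2 + RInt (gauss_damped y) 0 1).
  assert (Hconst : h x = h 0).
  { assert (H : is_RInt (fun _ => 0) 0 x (minus (h x) (h 0))).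
    { apply (@is_RInt_derive R_CompleteNormedModule).
      - intros; apply is_derive_gauss_int_sq_plus_damped.
      - intros; apply (@continuous_const R_UniformSpace R_UniformSpace). }
    apply (@is_RInt_unique R_CompleteNormedModule) in H.
    rewrite RInt_const in H. unfold minus, plus, opp, scal in H; simpl in H.
    unfold mult in H; simpl in H. lra. }
  assert (Hatan : is_RInt (gauss_damped 0) 0 1 (minus (atan 1) (atan 0))).
  { apply (@is_RInt_derive R_CompleteNormedModule).
    - intros t _. replace (gauss_damped 0 t) with (/ (1 + t²)) by
        (unfold gauss_damped, Rsqr; cbn [pow];
         replace (- (0 * (0 * 1) * (1 + t * (t * 1)))) with 0 by ring;
         rewrite exp_0; field; nra).
      apply is_derive_atan.
    - intros t _. apply ex_derive_continuous_R. unfold gauss_damped. auto_derive. nra. }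
  apply (@is_RInt_unique R_CompleteNormedModule) in Hatan.
  unfold h in Hconst. rewrite Hconst, Hatan, atan_1, atan_0.
  unfold gauss_int. rewrite RInt_point. unfold minus, plus, opp, zero; simpl. ring.
Qed.
Lemma exp_le_compat x y : x <= y -> exp x <= exp y.
Proof. intros [H | ->]; [left; apply exp_increasing, H | right; reflexivity]. Qed.

Lemma gauss_damped_bounds x t : 0 <= gauss_damped x t <= gauss x.
Proof.
  unfold gauss_damped, gauss, Rdiv.
  assert (0 < / (1 + t ^ 2)) by (apply Rinv_0_lt_compat; nra).
  assert (/ (1 + t ^ 2) <= 1) by (rewrite <- Rinv_1; apply Rinv_le_contravar; nra).
  assert (exp (- (x ^ 2 * (1 + t ^ 2))) <= exp (- x ^ 2)) by (apply exp_le_compat; nra).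
  assert (0 < exp (- (x ^ 2 * (1 + t ^ 2)))) by apply exp_pos.
  split; nra.
Qed.

Lemma RInt_gauss_damped_bounds x : 0 <= RInt (gauss_damped x) 0 1 <= gauss x.
Proof.
  split.
  - apply RInt_ge_0; [lra | apply ex_RInt_gauss_damped |].
    intros; apply gauss_damped_bounds.
  - replace (gauss x) with (RInt (fun _ => gauss x) 0 1)
      by (rewrite RInt_const; unfold scal; simpl; unfold mult; simpl; ring).
    apply RInt_le; [lra | apply ex_RInt_gauss_damped | apply (@ex_RInt_const R_NormedModule) |].
    intros; apply gauss_damped_bounds.
Qed.

Lemma exp_pow_INR y n : exp y ^ n = exp (INR n * y).
Proof.
  induction n as [| n IH]; simpl pow.
  - rewrite Rmult_0_l, exp_0. reflexivity.
  - rewrite IH, <- exp_plus, S_INR. f_equal. ring.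
Qed.

Lemma exp_ge_pow_div y m : 0 <= y -> (y / INR (S m)) ^ S m <= exp y.
Proof.
  intros Hy.
  assert (Hm : 0 < INR (S m)) by (apply lt_0_INR; lia).
  assert (Hq : 0 <= y / INR (S m)) by (apply Rdiv_le_0_compat; lra).
  replace (exp y) with (exp (y / INR (S m)) ^ S m) by (rewrite exp_pow_INR; f_equal; field; lra).
  apply pow_incr. split; [exact Hq |].
  assert (H := exp_ineq1_le (y / INR (S m))). lra.
Qed.

(* Since r <= r^2 and (r / (k+1))^(k+1) <= e^r for r >= 1. *)
Lemma pow_mul_gauss_le k r : 1 <= r ->
  0 <= r ^ k * exp (- r ^ 2) <= INR (S k) ^ S k / r.
Proof.
  intros Hr.
  assert (Hm : 0 < INR (S k)) by (apply lt_0_INR; lia).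
  assert (Hrk : 0 < r ^ k) by (apply pow_lt; lra).
  assert (He : exp (- r ^ 2) <= exp (- r)) by (apply exp_le_compat; nra).
  assert (Hpow : (r / INR (S k)) ^ S k <= exp r) by (apply exp_ge_pow_div; lra).
  assert (Hpos : 0 < (r / INR (S k)) ^ S k) by (apply pow_lt, Rdiv_lt_0_compat; lra).
  assert (Hinv : exp (- r) <= / (r / INR (S k)) ^ S k)
    by (rewrite exp_Ropp; apply Rinv_le_contravar; lra).
  assert (0 < exp (- r ^ 2)) by apply exp_pos.
  split; [nra |].
  apply Rle_trans with (r ^ k * / (r / INR (S k)) ^ S k).
  - apply Rmult_le_compat_l; lra.
  - right. unfold Rdiv. rewrite Rpow_mult_distr, pow_inv.
    change (r ^ S k) with (r * r ^ k).
    assert (INR (S k) ^ S k <> 0) by (apply pow_nonzero; lra).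
    field. repeat split; [lra | assumption | lra].
Qed.

Lemma is_lim_plus_0 (f g : R -> R) x :
  is_lim f x 0 -> is_lim g x 0 -> is_lim (fun y => f y + g y) x 0.
Proof.
  intros Hf Hg. replace (Finite 0) with (Finite (0 + 0)) by (f_equal; ring).
  apply is_lim_plus'; assumption.
Qed.

Lemma is_lim_scal_0 (c : R) (f : R -> R) x : is_lim f x 0 -> is_lim (fun y => c * f y) x 0.
Proof.
  intros Hf. replace (Finite 0) with (Rbar_mult c 0) by (simpl; f_equal; ring).
  apply is_lim_scal_l; assumption.
Qed.

Lemma is_lim_minus_0 (f g : R -> R) x :
  is_lim f x 0 -> is_lim g x 0 -> is_lim (fun y => f y - g y) x 0.
Proof.
  intros Hf Hg. apply (is_lim_ext (fun y => f y + -1 * g y)); [intros; ring |].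
  apply is_lim_plus_0; [| apply is_lim_scal_0]; assumption.
Qed.

Lemma is_lim_0_dominated (f g : R -> R) :
  Rbar_locally' p_infty (fun r => Rabs (f r) <= g r) -> is_lim g p_infty 0 ->
  is_lim f p_infty 0.
Proof.
  intros Hdom Hg. apply is_lim_le_le_loc with (fun r => -1 * g r) g.
  - revert Hdom. apply filter_imp. intros r Hr. apply Rabs_le_between in Hr. lra.
  - apply is_lim_scal_0, Hg.
  - exact Hg.
Qed.

Lemma is_lim_inv_p_infty : is_lim (fun r => / r) p_infty 0.
Proof.
  replace (Finite 0) with (Rbar_inv p_infty) by reflexivity.
  apply is_lim_inv; [apply is_lim_id | discriminate].
Qed.

Lemma is_lim_pow_mul_gauss k : is_lim (fun r => r ^ k * exp (- r ^ 2)) p_infty 0.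
Proof.
  apply is_lim_le_le_loc with (fun _ => 0) (fun r => INR (S k) ^ S k * / r).
  - exists 1. intros r Hr. apply pow_mul_gauss_le. lra.
  - apply is_lim_const.
  - apply is_lim_scal_0, is_lim_inv_p_infty.
Qed.

Lemma is_lim_gauss : is_lim gauss p_infty 0.
Proof.
  apply (is_lim_ext (fun r => r ^ 0 * exp (- r ^ 2))); [intros; unfold gauss; ring |].
  apply is_lim_pow_mul_gauss.
Qed.

Lemma is_lim_gauss_int : is_lim gauss_int p_infty (sqrt PI / 2).
Proof.
  assert (Hsq : is_lim (fun x => gauss_int x ^ 2) p_infty (PI / 4)).
  { apply is_lim_le_le_loc with (fun x => PI / 4 + -1 * gauss x) (fun _ => PI / 4).
    - exists 0. intros x _.
      assert (H := gauss_int_sq_plus_damped x). assert (B := RInt_gauss_damped_bounds x). lra.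
    - replace (Finite (PI / 4)) with (Finite (PI / 4 + 0)) by (f_equal; ring).
      apply is_lim_plus'; [apply is_lim_const | apply is_lim_scal_0, is_lim_gauss].
    - apply is_lim_const. }
  apply is_lim_ext_loc with (fun x => sqrt (gauss_int x ^ 2)).
  { exists 0. intros x Hx. apply sqrt_pow2, gauss_int_nonneg. lra. }
  replace (sqrt PI / 2) with (sqrt (PI / 4)).
  - apply (filterlim_comp _ _ _ (fun x => gauss_int x ^ 2) sqrt _ (locally (PI / 4)));
      [exact Hsq |].
    apply continuity_pt_filterlim, continuity_pt_sqrt. assert (H := PI_RGT_0). lra.
  - rewrite sqrt_div_alt by lra.
    replace 4 with (2 ^ 2) by ring. rewrite sqrt_pow2; lra.
Qed.

Lemma sqrt_PI_pos : 0 < sqrt PI.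
Proof. apply sqrt_lt_R0, PI_RGT_0. Qed.

Lemma is_lim_erf : is_lim erf p_infty 1.
Proof.
  apply (is_lim_ext (fun x => 2 / sqrt PI * gauss_int x)); [reflexivity |].
  replace (Finite 1) with (Rbar_mult (2 / sqrt PI) (sqrt PI / 2)).
  - apply is_lim_scal_l, is_lim_gauss_int.
  - simpl. f_equal. assert (H := sqrt_PI_pos). field. lra.
Qed.

Lemma is_derive_erf x : is_derive erf x (2 / sqrt PI * exp (- x ^ 2)).
Proof. apply (is_derive_ext (fun y => 2 / sqrt PI * gauss_int y)); [reflexivity |].
  apply is_derive_scal, is_derive_gauss_int.
Qed.

Lemma ex_derive_erf x : ex_derive erf x.
Proof. eexists. apply is_derive_erf. Qed.

Lemma Derive_erf x : Derive (fun y => erf y) x = 2 / sqrt PI * exp (- x ^ 2).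
Proof. apply is_derive_unique, is_derive_erf. Qed.

(** * Decay of erfc *)

(* The tail is bounded by the integral of (t / r) gauss t, which is elementary. *)
Lemma RInt_gauss_tail_le r y : 0 < r <= y -> 0 <= RInt gauss r y <= exp (- r ^ 2) / (2 * r).
Proof.
  intros Hry. split.
  - apply RInt_ge_0; [lra | apply ex_RInt_gauss |]. intros; left; apply exp_pos.
  - assert (Hcont : forall t, continuous (fun t => t / r * gauss t) t).
    { intros t. apply ex_derive_continuous_R. unfold gauss. auto_derive. lra. }
    assert (Hprim : is_RInt (fun t => t / r * gauss t) r y
                      (minus (- exp (- y ^ 2) / (2 * r)) (- exp (- r ^ 2) / (2 * r)))).
    { apply (@is_RInt_derive R_CompleteNormedModule (fun t => - exp (- t ^ 2) / (2 * r))).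
      - intros t _. unfold gauss. auto_derive; [lra |]. cbn [pow]. field. lra.
      - intros t _. apply Hcont. }
    apply (@is_RInt_unique R_CompleteNormedModule) in Hprim.
    apply Rle_trans with (RInt (fun t => t / r * gauss t) r y).
    + apply RInt_le; [lra | apply ex_RInt_gauss | |].
      * apply (@ex_RInt_continuous R_CompleteNormedModule). intros; apply Hcont.
      * intros t Ht. unfold gauss. assert (0 < exp (- t ^ 2)) by apply exp_pos.
        assert (1 <= t / r) by (apply Rle_div_r; lra). nra.
    + rewrite Hprim.
      replace (minus _ _) with ((exp (- r ^ 2) - exp (- y ^ 2)) / (2 * r))
        by (unfold minus, plus, opp; simpl; field; lra).
      assert (0 < exp (- y ^ 2)) by apply exp_pos.
      unfold Rdiv. apply Rmult_le_compat_r; [left; apply Rinv_0_lt_compat |]; lra.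
Qed.

Lemma erfc_bounds r : 0 < r -> 0 <= erfc r <= exp (- r ^ 2) / (r * sqrt PI).
Proof.
  intros Hr.
  assert (Hc : 0 < sqrt PI) by apply sqrt_PI_pos.
  assert (Hdiff : forall y, r <= y -> 0 <= erf y - erf r <= exp (- r ^ 2) / (r * sqrt PI)).
  { intros y Hy.
    assert (E : erf y - erf r = 2 / sqrt PI * RInt gauss r y).
    { unfold erf. change (fun s => exp (- s ^ 2)) with gauss.
      rewrite <- (RInt_Chasles gauss 0 r y) by apply ex_RInt_gauss.
      unfold plus; simpl. ring. }
    rewrite E.
    destruct (RInt_gauss_tail_le r y) as [H0 H1]; [lra |].
    replace (exp (- r ^ 2) / (r * sqrt PI)) with (2 / sqrt PI * (exp (- r ^ 2) / (2 * r)))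
      by (field; lra).
    assert (0 < 2 / sqrt PI) by (apply Rdiv_lt_0_compat; lra).
    split; [apply Rmult_le_pos | apply Rmult_le_compat_l]; lra. }
  assert (Hlim : is_lim (fun y => erf y - erf r) p_infty (erfc r)).
  { unfold erfc. replace (Finite (1 - erf r)) with (Finite (1 + - erf r)) by reflexivity.
    apply is_lim_plus'; [apply is_lim_erf | apply is_lim_const]. }
  split.
  - refine (is_lim_le_loc (fun _ => 0) _ p_infty 0 (erfc r) _ (is_lim_const 0 _) Hlim).
    exists r. intros y Hy. apply Hdiff. lra.
  - refine (is_lim_le_loc _ (fun _ => exp (- r ^ 2) / (r * sqrt PI)) p_infty (erfc r) _ _
              Hlim (is_lim_const _ _)).
    exists r. intros y Hy. apply Hdiff. lra.
Qed.

Lemma div_pow_le_self x r k : 0 <= x -> 1 <= r -> 0 <= x / r ^ k <= x.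
Proof.
  intros Hx Hr.
  assert (Hk : 1 <= r ^ k) by (apply pow_R1_Rle; lra).
  assert (Hinv : 0 < / r ^ k <= 1)
    by (split; [apply Rinv_0_lt_compat | rewrite <- Rinv_1; apply Rinv_le_contravar]; lra).
  unfold Rdiv. split; nra.
Qed.

Lemma is_lim_erfc_mul_pow k : is_lim (fun r => erfc r * r ^ k) p_infty 0.
Proof.
  apply (is_lim_0_dominated _ (fun r => / sqrt PI * (r ^ k * exp (- r ^ 2))));
    [| apply is_lim_scal_0, is_lim_pow_mul_gauss].
  exists 1. intros r Hr.
  destruct (erfc_bounds r) as [H0 H1]; [lra |].
  assert (Hc := sqrt_PI_pos).
  assert (Hk : 0 < r ^ k) by (apply pow_lt; lra).
  assert (Hb : exp (- r ^ 2) / (r * sqrt PI) <= / sqrt PI * exp (- r ^ 2)).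
  { replace (exp (- r ^ 2) / (r * sqrt PI)) with (/ sqrt PI * exp (- r ^ 2) / r ^ 1)
      by (field; lra).
    apply div_pow_le_self; [| lra].
    apply Rmult_le_pos; [left; apply Rinv_0_lt_compat, Hc | left; apply exp_pos]. }
  rewrite Rabs_pos_eq by nra. nra.
Qed.

Lemma is_lim_erfc_div_pow k : is_lim (fun r => erfc r / r ^ k) p_infty 0.
Proof.
  apply (is_lim_0_dominated _ (fun r => erfc r * r ^ 0)); [| apply is_lim_erfc_mul_pow].
  exists 1. intros r Hr.
  destruct (erfc_bounds r) as [H0 _]; [lra |].
  destruct (div_pow_le_self (erfc r) r k) as [H1 H2]; [lra | lra |].
  rewrite Rabs_pos_eq by lra. simpl. lra.
Qed.

Lemma is_lim_gauss_div_pow k : is_lim (fun r => exp (- r ^ 2) / r ^ k) p_infty 0.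
Proof.
  apply (is_lim_0_dominated _ gauss); [| apply is_lim_gauss].
  exists 1. intros r Hr.
  destruct (div_pow_le_self (exp (- r ^ 2)) r k) as [H1 H2]; [left; apply exp_pos | lra |].
  rewrite Rabs_pos_eq by lra. exact H2.
Qed.

Lemma is_lim_erfc_mul_id : is_lim (fun r => erfc r * r) p_infty 0.
Proof.
  apply (is_lim_ext (fun r => erfc r * r ^ 1)); [intros; ring | apply is_lim_erfc_mul_pow].
Qed.

Lemma is_lim_erfc_div_id : is_lim (fun r => erfc r / r) p_infty 0.
Proof.
  apply (is_lim_ext (fun r => erfc r / r ^ 1)); [intros; simpl; rewrite Rmult_1_r; reflexivity |].
  apply is_lim_erfc_div_pow.
Qed.

(* [is_lim_minus_0] must come first: [Rminus] unfolds, so [is_lim_plus_0] also matches [f - g]. *)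
Ltac vanish := repeat first
  [ apply is_lim_minus_0 | apply is_lim_plus_0
  | apply is_lim_erfc_mul_pow | apply is_lim_erfc_mul_id
  | apply is_lim_erfc_div_pow | apply is_lim_erfc_div_id
  | apply is_lim_pow_mul_gauss | apply is_lim_gauss_div_pow | apply is_lim_gauss
  | apply is_lim_scal_0 ].

(** * Antiderivatives after the substitution r = sqrt (s^2 + a2) *)

(* Antiderivatives in r, vanishing at +oo, of erfc r, erfc r (r^2 - a2),
   phi3 r (r^2 - a2)^2 / r^4 and phi3 r (r^2 - a2)^3 / r^4, with a2 = lam^2. *)
Definition I0_antider (r : R) : R := erfc r * r - 1 / sqrt PI * exp (- r ^ 2).

Definition I2_antider (a2 r : R) : R :=
  1 / 3 * (erfc r * r ^ 3) - a2 * (erfc r * r) - 1 / (3 * sqrt PI) * (r ^ 2 * exp (- r ^ 2))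
  + (3 * a2 - 1) / (3 * sqrt PI) * exp (- r ^ 2).

Definition K0_antider (a2 r : R) : R :=
  erfc r * r + 2 * a2 * (erfc r / r) - a2 ^ 2 / 3 * (erfc r / r ^ 3)
  - 2 / (3 * sqrt PI) * (r ^ 2 * exp (- r ^ 2)) + 4 * (a2 - 2) / (3 * sqrt PI) * exp (- r ^ 2)
  - 2 * a2 ^ 2 / (3 * sqrt PI) * (exp (- r ^ 2) / r ^ 2).

Definition K2_antider (a2 r : R) : R :=
  1 / 3 * (erfc r * r ^ 3) - 3 * a2 * (erfc r * r) - 3 * a2 ^ 2 * (erfc r / r)
  + a2 ^ 3 / 3 * (erfc r / r ^ 3)
  - 2 / (3 * sqrt PI) * (r ^ 4 * exp (- r ^ 2))
  + (6 * a2 - 8) / (3 * sqrt PI) * (r ^ 2 * exp (- r ^ 2))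
  - (6 * a2 ^ 2 - 24 * a2 + 8) / (3 * sqrt PI) * exp (- r ^ 2)
  + 2 * a2 ^ 3 / (3 * sqrt PI) * (exp (- r ^ 2) / r ^ 2).

Lemma is_lim_I0_antider : is_lim I0_antider p_infty 0.
Proof. unfold I0_antider. vanish. Qed.

Lemma is_lim_I2_antider a2 : is_lim (I2_antider a2) p_infty 0.
Proof. unfold I2_antider. vanish. Qed.

Lemma is_lim_K0_antider a2 : is_lim (K0_antider a2) p_infty 0.
Proof. unfold K0_antider. vanish. Qed.

Lemma is_lim_K2_antider a2 : is_lim (K2_antider a2) p_infty 0.
Proof. unfold K2_antider. vanish. Qed.

Ltac erf_side :=
  repeat split;
  first [ apply ex_derive_erf | exact I | repeat apply Rmult_integral_contrapositive_currified; lra ].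

Ltac solve_erf_derivative :=
  auto_derive; [erf_side |];
  rewrite ?Derive_erf; cbn [pow]; assert (Hsqrt := sqrt_PI_pos); field; repeat split; lra.

Lemma is_derive_I0_antider r : is_derive I0_antider r (erfc r).
Proof. unfold I0_antider, erfc. solve_erf_derivative. Qed.

Lemma is_derive_I2_antider a2 r : is_derive (I2_antider a2) r (erfc r * (r ^ 2 - a2)).
Proof. unfold I2_antider, erfc. solve_erf_derivative. Qed.

Lemma is_derive_K0_antider a2 r : 0 < r ->
  is_derive (K0_antider a2) r (phi3 r * (r ^ 2 - a2) ^ 2 / r ^ 4).
Proof. intros Hr. unfold K0_antider, phi3, s3, erfc. solve_erf_derivative. Qed.

Lemma is_derive_K2_antider a2 r : 0 < r ->
  is_derive (K2_antider a2) r (phi3 r * (r ^ 2 - a2) ^ 3 / r ^ 4).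
Proof. intros Hr. unfold K2_antider, phi3, s3, erfc. solve_erf_derivative. Qed.

Lemma K0_antider_diag r : K0_antider (r ^ 2) r = 8 / 3 * I0_antider r.
Proof.
  unfold K0_antider, I0_antider. assert (Hsqrt := sqrt_PI_pos).
  destruct (Req_dec r 0) as [-> | Hr].
  - rewrite !pow_i, !Rdiv_0_r by lia. field. lra.
  - field. lra.
Qed.

Lemma K2_antider_diag r : K2_antider (r ^ 2) r = 8 * I2_antider (r ^ 2) r.
Proof.
  unfold K2_antider, I2_antider. assert (Hsqrt := sqrt_PI_pos).
  destruct (Req_dec r 0) as [-> | Hr].
  - rewrite !pow_i, !Rdiv_0_r by lia. field. lra.
  - field. lra.
Qed.

Ltac continuity_by_derive :=
  apply ex_derive_continuous_R; unfold phi3, s3, erfc; auto_derive; erf_side.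

Lemma continuous_erfc x : continuous erfc x.
Proof. continuity_by_derive. Qed.

(* For a2 = 0 the reciprocal-power terms have coefficient 0, so the antiderivative is smooth
   at r = 0; this is what the case lam = 0 needs, where the substitution is the identity. *)
Lemma is_derive_K0_antider_0 x : is_derive (K0_antider 0) x (phi3 x).
Proof.
  apply (is_derive_ext (fun r => erfc r * r - 2 / (3 * sqrt PI) * (r ^ 2 * exp (- r ^ 2))
                                 - 8 / (3 * sqrt PI) * exp (- r ^ 2))).
  - intros r. apply Rminus_diag_uniq. unfold K0_antider, Rdiv. ring.
  - unfold phi3, s3, erfc. solve_erf_derivative.
Qed.

Lemma is_derive_K2_antider_0 x : is_derive (K2_antider 0) x (phi3 x * x ^ 2).
Proof.
  apply (is_derive_ext (fun r => 1 / 3 * (erfc r * r ^ 3)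
                                 - 2 / (3 * sqrt PI) * (r ^ 4 * exp (- r ^ 2))
                                 - 8 / (3 * sqrt PI) * (r ^ 2 * exp (- r ^ 2))
                                 - 8 / (3 * sqrt PI) * exp (- r ^ 2))).
  - intros r. apply Rminus_diag_uniq. unfold K2_antider, Rdiv. ring.
  - unfold phi3, s3, erfc. solve_erf_derivative.
Qed.

(** * The improper integrals in closed form *)

Lemma is_RInt_gen_primitive (f F dF : R -> R) :
  (forall x, is_derive F x (dF x)) -> (forall x, continuous dF x) ->
  (forall x, 0 < x -> f x = dF x) -> is_lim F p_infty 0 ->
  is_RInt_gen f (at_point 0) (Rbar_locally p_infty) (- F 0).
Proof.
  intros HF HdF Hf Hlim.
  assert (HD : forall x, Derive F x = dF x) by (intros; apply is_derive_unique, HF).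
  assert (Hpos : forall P : R * R -> Prop, (forall b, 0 < b -> P (0, b)) ->
            filter_prod (at_point 0) (Rbar_locally p_infty) P).
  { intros P HP. apply (Filter_prod _ _ _ (fun a => a = 0) (fun b => 0 < b)).
    - reflexivity.
    - exists 0. intros; assumption.
    - intros a b -> Hb. apply HP, Hb. }
  apply (is_RInt_gen_ext (Derive F)).
  { apply Hpos. intros b Hb x Hx. simpl in Hx. rewrite Rmin_left in Hx by lra.
    rewrite HD. symmetry. apply Hf. lra. }
  replace (- F 0) with (0 - F 0) by ring.
  apply is_RInt_gen_Derive.
  - apply Hpos. intros; eexists; apply HF.
  - apply Hpos. intros b _ x _. apply (continuous_ext dF); [intros; symmetry; apply HD | apply HdF].
  - intros P HP. exact (locally_singleton _ _ HP).
  - exact Hlim.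
Qed.

Lemma is_lim_radius lam : is_lim (fun s => sqrt (s ^ 2 + lam ^ 2)) p_infty p_infty.
Proof.
  apply (is_lim_le_p_loc (fun s => s)); [| apply is_lim_id].
  exists 0. intros s Hs.
  rewrite <- (sqrt_pow2 s) at 1 by lra. apply sqrt_le_1_alt. nra.
Qed.

Lemma is_RInt_gen_radial (f q Q : R -> R) (lam : R) : lam <> 0 ->
  (forall r, 0 < r -> is_derive Q r (q r)) -> (forall r, 0 < r -> continuous q r) ->
  is_lim Q p_infty 0 ->
  (forall s, 0 < s -> f s = q (sqrt (s ^ 2 + lam ^ 2)) / sqrt (s ^ 2 + lam ^ 2) * s) ->
  is_RInt_gen f (at_point 0) (Rbar_locally p_infty) (- Q (Rabs lam)).
Proof.
  intros Hlam HQ Hq Hlim Hf.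
  assert (Hlam2 : 0 < lam ^ 2) by (rewrite <- pow2_abs; apply pow_lt, Rabs_pos_lt, Hlam).
  set (rad s := sqrt (s ^ 2 + lam ^ 2)).
  assert (Hrad : forall s, 0 < rad s) by (intros; apply sqrt_lt_R0; nra).
  assert (Hrad0 : rad 0 = Rabs lam).
  { unfold rad. rewrite <- (pow2_abs lam).
    replace (0 ^ 2 + Rabs lam ^ 2) with (Rabs lam ^ 2) by ring.
    apply sqrt_pow2, Rabs_pos. }
  assert (Hdrad : forall s, is_derive rad s (s / rad s)).
  { intros s. unfold rad. auto_derive; [nra |]. cbn [pow].
    field. apply Rgt_not_eq, sqrt_lt_R0. nra. }
  rewrite <- Hrad0.
  apply (is_RInt_gen_primitive f (fun s => Q (rad s)) (fun s => q (rad s) / rad s * s)).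
  - intros s. assert (H := is_derive_comp Q rad s _ _ (HQ _ (Hrad s)) (Hdrad s)).
    replace (q (rad s) / rad s * s) with (scal (s / rad s) (q (rad s)))
      by (unfold scal; simpl; unfold mult; simpl; field; apply Rgt_not_eq, Hrad).
    exact H.
  - intros s.
    assert (Hcrad : continuous rad s) by (apply ex_derive_continuous_R; eexists; apply Hdrad).
    apply (@continuous_mult R_UniformSpace R_AbsRing); [| apply continuous_id].
    apply (@continuous_mult R_UniformSpace R_AbsRing).
    + apply (continuous_comp rad q); [exact Hcrad | apply Hq, Hrad].
    + apply continuous_Rinv_comp; [exact Hcrad | apply Rgt_not_eq, Hrad].
  - exact Hf.
  - apply (is_lim_comp Q rad p_infty 0 p_infty Hlim (is_lim_radius lam)).
    exists 0. intros; discriminate.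
Qed.

Lemma sqrt_sq_plus_0 s : 0 <= s -> sqrt (s ^ 2 + 0 ^ 2) = s.
Proof. intros Hs. rewrite Rplus_comm, pow_i, Rplus_0_l by lia. apply sqrt_pow2, Hs. Qed.

(* Express s^(2k+1) through s and r^2 - lam^2 = s^2, where r = sqrt (s^2 + lam^2). *)
Ltac radial_identity :=
  let s := fresh "s" in let Hs := fresh "Hs" in
  intros s Hs;
  match goal with |- context [sqrt (s ^ 2 + ?l ^ 2)] =>
    assert (Hsq : sqrt (s ^ 2 + l ^ 2) ^ 2 = s ^ 2 + l ^ 2) by (apply pow2_sqrt; nra);
    assert (Hpos : 0 < sqrt (s ^ 2 + l ^ 2)) by (apply sqrt_lt_R0; nra);
    set (r := sqrt (s ^ 2 + l ^ 2)) in *;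
    replace (l ^ 2) with (r ^ 2 - s ^ 2) by lra;
    cbn [Nat.add]; field; lra
  end.

Lemma I0_closed lam : I_n 0 lam = - I0_antider (Rabs lam).
Proof.
  unfold I_n, int0inf. apply is_RInt_gen_unique.
  destruct (Req_dec lam 0) as [-> | Hlam].
  - rewrite Rabs_R0. apply (is_RInt_gen_primitive _ I0_antider erfc).
    + exact is_derive_I0_antider.
    + exact continuous_erfc.
    + intros s Hs. rewrite sqrt_sq_plus_0 by lra. cbn [Nat.add]. field. lra.
    + exact is_lim_I0_antider.
  - apply (is_RInt_gen_radial _ erfc); [exact Hlam | intros; apply is_derive_I0_antider
      | intros; apply continuous_erfc | exact is_lim_I0_antider | radial_identity].
Qed.

Lemma I2_closed lam : I_n 2 lam = - I2_antider (lam ^ 2) (Rabs lam).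
Proof.
  unfold I_n, int0inf. apply is_RInt_gen_unique.
  destruct (Req_dec lam 0) as [-> | Hlam].
  - rewrite Rabs_R0. apply (is_RInt_gen_primitive _ _ (fun r => erfc r * (r ^ 2 - 0 ^ 2))).
    + intros; apply is_derive_I2_antider.
    + intros; continuity_by_derive.
    + intros s Hs. rewrite sqrt_sq_plus_0 by lra. cbn [Nat.add]. field. lra.
    + apply is_lim_I2_antider.
  - apply (is_RInt_gen_radial _ (fun r => erfc r * (r ^ 2 - lam ^ 2))); [exact Hlam
      | intros; apply is_derive_I2_antider | intros; continuity_by_derive
      | apply is_lim_I2_antider | radial_identity].
Qed.

Lemma K0_closed lam : K_n 0 lam = - K0_antider (lam ^ 2) (Rabs lam).
Proof.
  destruct (Req_dec lam 0) as [-> | Hlam].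
  - rewrite Rabs_R0, (pow_i 2) by lia.
    unfold K_n, int0inf. apply is_RInt_gen_unique.
    apply (is_RInt_gen_primitive _ _ phi3).
    + exact is_derive_K0_antider_0.
    + intros; continuity_by_derive.
    + intros s Hs. rewrite sqrt_sq_plus_0 by lra. cbn [Nat.add]. field. lra.
    + apply is_lim_K0_antider.
  - unfold K_n, int0inf. apply is_RInt_gen_unique.
    apply (is_RInt_gen_radial _ (fun r => phi3 r * (r ^ 2 - lam ^ 2) ^ 2 / r ^ 4)); [exact Hlam
      | intros; apply is_derive_K0_antider; assumption | intros; continuity_by_derive
      | apply is_lim_K0_antider | radial_identity].
Qed.

Lemma K2_closed lam : K_n 2 lam = - K2_antider (lam ^ 2) (Rabs lam).
Proof.
  destruct (Req_dec lam 0) as [-> | Hlam].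
  - rewrite Rabs_R0, (pow_i 2) by lia.
    unfold K_n, int0inf. apply is_RInt_gen_unique.
    apply (is_RInt_gen_primitive _ _ (fun r => phi3 r * r ^ 2)).
    + exact is_derive_K2_antider_0.
    + intros; continuity_by_derive.
    + intros s Hs. rewrite sqrt_sq_plus_0 by lra. cbn [Nat.add]. field. lra.
    + apply is_lim_K2_antider.
  - unfold K_n, int0inf. apply is_RInt_gen_unique.
    apply (is_RInt_gen_radial _ (fun r => phi3 r * (r ^ 2 - lam ^ 2) ^ 3 / r ^ 4)); [exact Hlam
      | intros; apply is_derive_K2_antider; assumption | intros; continuity_by_derive
      | apply is_lim_K2_antider | radial_identity].
Qed.

Theorem mainTheorem4 :
  forall lam : R, K_n 0 lam = 8 / 3 * I_n 0 lam /\ K_n 2 lam = 8 * I_n 2 lam.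
Proof.
  intros lam.
  rewrite K0_closed, K2_closed, I0_closed, I2_closed, <- (pow2_abs lam).
  rewrite K0_antider_diag, K2_antider_diag.
  split; ring.
Qed.
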